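(* Let $x_1\ge x_2\ge\dots\ge x_n$ be positive integers with $\sum_{i=1}^n x_i=2n-2$. Let $p,q$ be positive integers with $p\ge q>1$ and $p+q=n+1$. Then there exist sequences of positive integers $a_1,\dots,a_p$ and $b_1,\dots,b_q$ with $\sum_{i=1}^p a_i=2p-2$ and $\sum_{i=1}^q b_i=2q-2$, such that $a_1+b_1=x_1$ and the multiset $\{a_2,\dots,a_p,b_2,\dots,b_q\}$ equals the multiset $\{x_2,\dots,x_n\}$. *)

From mathcomp Require Import all_boot.
Set Implicit Arguments. Unset Strict Implicit. Unset Printing Implicit Defensive.
(* Sequences x_1..x_n are represented by s : seq nat with s`_0 = x_1 (nth 0 s 0). *)

From mathcomp Require Import all_boot zify.

(* Put y := x_2 .. x_n, of size P + Q with P := p - 1 and Q := q - 1, and let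
   a_2 .. a_p be a window of P consecutive entries of y, the remaining Q entries
   forming b_2 .. b_q.  Then a_1 and b_1 are forced, and a_1 + b_1 = x_1 because
   the x_i add up to 2n - 2; they are positive iff the window sum lies in
   [S - (2Q - 1), 2P - 1], where S is the sum of y.  Since y is nonincreasing
   with average below 2, both its first window complement and its last window
   have small sums; sliding the window one step lowers its sum by at most
   x_1 - 1, which is the number of admissible values, so some window lands in
   the interval. *)

Lemma geq_trans : transitive geq.
Proof. by move=> a b c /= hba hcb; apply: leq_trans hcb hba. Qed.

Lemma sum_seq_le_const (s : seq nat) c :
  {in s, forall v, v <= c} -> \sum_(v <- s) v <= size s * c.
Proof.
move=> le_c; rewrite -sum1_size big_distrl /= big_seq [X in _ <= X]big_seq.
by apply: leq_sum => v /le_c; rewrite mul1n.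
Qed.

Lemma sum_seq_ge_const (s : seq nat) c :
  {in s, forall v, c <= v} -> size s * c <= \sum_(v <- s) v.
Proof.
move=> ge_c; rewrite -sum1_size big_distrl /= big_seq [X in _ <= X]big_seq.
by apply: leq_sum => v /ge_c; rewrite mul1n.
Qed.

Lemma sorted_geq_cat_mean (t d : seq nat) :
  sorted geq (t ++ d) -> size t * \sum_(v <- d) v <= size d * \sum_(v <- t) v.
Proof.
rewrite (sorted_pairwise geq_trans) pairwise_cat => /and3P [/allrelP td _ pd].
case: d td pd => [|m d] td pd; first by rewrite big_nil muln0.
have le_m : {in m :: d, forall v, v <= m}.
  move: pd; rewrite pairwise_cons => /andP [/allP md _] v.
  by rewrite inE => /predU1P [-> // | /md].
have ge_m : {in t, forall u, m <= u} by move=> u ut; apply: td; rewrite ?mem_head.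
apply: (leq_trans (leq_mul (leqnn _) (sum_seq_le_const _ _ le_m))).
by rewrite mulnCA leq_mul2l sum_seq_ge_const ?orbT.
Qed.

Lemma sorted_geq_sum_drop_lt (s : seq nat) c k :
  sorted geq s -> \sum_(v <- s) v < c * size s -> k < size s ->
  \sum_(v <- drop k s) v < c * (size s - k).
Proof.
move=> s_sorted + lt_k.
have := sorted_geq_cat_mean (take k s) (drop k s).
rewrite cat_take_drop (size_takel (ltnW lt_k)) size_drop => /(_ s_sorted) mean.
rewrite -{1}(cat_take_drop k s) big_cat /= -{1}(subnKC (ltnW lt_k)) mulnDr.
move: mean; set T := \sum_(v <- take k s) v; set D := \sum_(v <- drop k s) v.
move=> mean sum_lt.
have [// | D_ge] := ltnP D (c * (size s - k)).
have : (size s - k) * (c * k) <= (size s - k) * T.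
  by apply: leq_trans mean; rewrite (mulnC c) mulnCA (mulnC _ c) leq_mul2l D_ge orbT.
rewrite leq_mul2l subn_eq0 leqNgt lt_k /= => T_ge.
by move: sum_lt; rewrite ltnNge leq_add.
Qed.

Definition window_sum (k : nat) (s : seq nat) (j : nat) : nat :=
  \sum_(v <- take k (drop j s)) v.

Lemma window_sumS k s j : j + k < size s ->
  window_sum k s j + nth 0 s (j + k) = nth 0 s j + window_sum k s j.+1.
Proof.
move=> lt_jk; have lt_k : k < size (drop j s) by rewrite size_drop; lia.
have lt_j : j < size s by lia.
have := congr1 (fun r => \sum_(v <- r) v) (take_nth 0 lt_k).
rewrite big_rcons nth_drop => <-.
by rewrite (drop_nth 0 lt_j) /= big_cons.
Qed.

Lemma discrete_ivt_down (f : nat -> nat) N w lo hi :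
  (forall j, j < N -> f j <= f j.+1 + w) ->
  lo <= f 0 -> f N <= hi -> lo + w <= hi.+1 ->
  exists2 j, j <= N & lo <= f j <= hi.
Proof.
elim: N f => [|N IHN] f step lo_f0 fN_hi lo_w; first by exists 0; rewrite ?lo_f0.
have [f0_hi | hi_f0] := leqP (f 0) hi; first by exists 0; rewrite ?lo_f0.
have step0 := step 0 isT.
have [|j le_jN f_j] := IHN (f \o succn) (fun j lt_jN => step j.+1 lt_jN) _ fN_hi lo_w.
  by rewrite /=; lia.
by exists j.+1.
Qed.

Lemma balanced_window (y : seq nat) P Q M :
  size y = P + Q -> all (fun v => 0 < v) y -> sorted geq y ->
  {in y, forall v, v <= M} -> \sum_(v <- y) v + M = 2 * (P + Q) -> 0 < Q -> Q <= P ->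
  exists2 j, j <= Q &
    \sum_(v <- y) v <= window_sum P y j + (2 * Q - 1) /\ window_sum P y j <= 2 * P - 1.
Proof.
move=> size_y /allP y_pos y_sorted le_M sum_y Q_gt0 le_QP.
set S := \sum_(v <- y) v in sum_y *.
have ge_size : size y * 1 <= S by apply: sum_seq_ge_const.
have y0_in : nth 0 y 0 \in y by rewrite mem_nth // size_y addn_gt0 Q_gt0 orbT.
have M_gt0 : 0 < M := leq_trans (y_pos _ y0_in) (le_M _ y0_in).
have S_lt : S < 2 * size y by lia.
have head_sum : S - (2 * Q - 1) <= window_sum P y 0.
  have split_S : window_sum P y 0 + \sum_(v <- drop P y) v = S.
    by rewrite /window_sum drop0 -big_cat cat_take_drop.
  have := sorted_geq_sum_drop_lt _ _ P y_sorted S_lt.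
  by rewrite size_y addKn; lia.
have tail_sum : window_sum P y Q <= 2 * P - 1.
  have := sorted_geq_sum_drop_lt _ _ Q y_sorted S_lt.
  by rewrite /window_sum take_oversize ?size_drop size_y addnK //; lia.
have step j : j < Q -> window_sum P y j <= window_sum P y j.+1 + (M - 1).
  move=> lt_jQ; have lt_jP : j + P < size y by lia.
  have := window_sumS P y j lt_jP.
  have : 0 < nth 0 y (j + P) by apply/y_pos/mem_nth.
  have : nth 0 y j <= M by apply/le_M/mem_nth; apply: leq_ltn_trans (leq_addr P j) lt_jP.
  lia.
have room : S - (2 * Q - 1) + (M - 1) <= (2 * P - 1).+1 by lia.
have [j le_jQ /andP [lo_j j_hi]] := discrete_ivt_down _ _ _ _ _ step head_sum tail_sum room.
by exists j => //; split; lia.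
Qed.

Lemma balanced_split (y : seq nat) P Q M :
  size y = P + Q -> all (fun v => 0 < v) y -> sorted geq y ->
  {in y, forall v, v <= M} -> \sum_(v <- y) v + M = 2 * (P + Q) -> 0 < Q -> Q <= P ->
  exists A B : seq nat, [/\ perm_eq (A ++ B) y, size A = P,
    \sum_(v <- A) v <= 2 * P - 1 & \sum_(v <- y) v <= \sum_(v <- A) v + (2 * Q - 1)].
Proof.
move=> size_y y_pos y_sorted le_M sum_y Q_gt0 le_QP.
have [j le_jQ [lo hi]] := balanced_window _ _ _ _ size_y y_pos y_sorted le_M sum_y Q_gt0 le_QP.
exists (take P (drop j y)), (take j y ++ drop P (drop j y)); split => //.
- by rewrite perm_catCA !cat_take_drop.
- by rewrite size_takel // size_drop size_y; lia.
Qed.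

Theorem lemma2 (n p q : nat) (x : seq nat) :
  size x = n ->
  all (fun v => 0 < v) x ->
  sorted geq x ->
  \sum_(v <- x) v = 2 * n - 2 ->
  0 < p -> 0 < q -> q <= p -> 1 < q -> p + q = n + 1 ->
  exists (a b : seq nat),
    [/\ size a = p, size b = q,
        all (fun v => 0 < v) a & all (fun v => 0 < v) b] /\
    [/\ \sum_(v <- a) v = 2 * p - 2,
        \sum_(v <- b) v = 2 * q - 2,
        nth 0 a 0 + nth 0 b 0 = nth 0 x 0
      & perm_eq (behead a ++ behead b) (behead x)].
Proof.
move=> size_x x_pos x_sorted sum_x _ _ le_qp lt1q pq_n.
case: p le_qp pq_n => [|P]; first by case: q lt1q.
case: q lt1q => [|Q] // /ltnSE Q_gt0 /ltnSE le_QP pq_n.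
case: x size_x x_pos x_sorted sum_x => [|x1 y] /= size_y; first by lia.
move=> /andP [_ y_pos] xy_sorted; rewrite big_cons => sum_x.
have size_PQ : size y = P + Q by lia.
have sum_y : \sum_(v <- y) v + x1 = 2 * (P + Q) by lia.
have le_x1 : {in y, forall v, v <= x1} by apply/allP/(order_path_min geq_trans).
have [A [B [perm_AB size_A hi lo]]] := balanced_split _ _ _ _ size_PQ y_pos
  (path_sorted xy_sorted) le_x1 sum_y Q_gt0 le_QP.
have size_B : size B = Q.
  by have := perm_size perm_AB; rewrite size_cat size_A size_PQ => /addnI.
have sum_AB : \sum_(v <- A) v + \sum_(v <- B) v = \sum_(v <- y) v.
  by rewrite -big_cat (perm_big _ perm_AB).
have /andP [A_pos B_pos] : all (fun v => 0 < v) A && all (fun v => 0 < v) B.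
  by rewrite -all_cat (perm_all _ perm_AB).
exists (2 * P - \sum_(v <- A) v :: A), (2 * Q - \sum_(v <- B) v :: B).
by split; split; rewrite /= ?size_A ?size_B ?A_pos ?B_pos ?big_cons ?andbT //; lia.
Qed.
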